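(* For every set of formulas $\Gamma$ and every formula $\alpha$: if $\Gamma\vdash_{L_1^0}\alpha$ then $\Gamma\vDash_{\mathcal{M}_1^0}\alpha$.
   Context: Formulas are built from a countable set of propositional variables using the unary connectives $\neg$ (negation) and $\circ$ (consistency) and the binary connectives $\land,\lor,\to$. Write $\circ^0\alpha=\alpha$, $\circ^{m+1}\alpha=\circ(\circ^m\alpha)$. The Hilbert calculus mbC has as axiom schemas those of a standard axiomatization of positive classical propositional logic in $\land,\lor,\to$, plus (TND) $\alpha\lor\neg\alpha$ and (bc1) $\circ\alpha\to(\alpha\to(\neg\alpha\to\beta))$; its only rule is modus ponens. mbCciw is mbC plus (ciw) $\circ\alpha\lor(\alpha\land\neg\alpha)$. $L_1^0$ is mbCciw plus the schema $\circ\circ\circ\alpha$. $\Gamma\vdash_L\alpha$ means $\alpha$ is derivable from $\Gamma$ in $L$. Semantics: on $\{0,1\}$ use the Boolean operations $\land,\lor,\to,\sim$ (complement). Let $\mathbb{B}_1^0=\{x=(x_1,x_2,x_3)\in\{0,1\}^3: x_1\lor x_2=1 \text{ and } x_3\lor\sim(x_1\land x_2)=1\}$. The multialgebra $\mathcal{B}_1^0$ on $\mathbb{B}_1^0$ has multioperations $x\# y=\{z\in\mathbb{B}_1^0: z_1=x_1\# y_1\}$ for $\#\in\{\land,\lor,\to\}$, $\neg x=\{z\in\mathbb{B}_1^0: z_1=x_2\}$, $\circ x=\{(\sim(x_1\land x_2),\,x_3,\,x_3\land\sim(x_1\land x_2))\}$. Designated set $D_1^0=\{x: x_1=1\}$;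 $\mathcal{M}_1^0=(\mathcal{B}_1^0,D_1^0)$. A valuation over $\mathcal{M}_1^0$ is a map $h$ from formulas to $\mathbb{B}_1^0$ with $h(\alpha\#\beta)\in h(\alpha)\# h(\beta)$, $h(\neg\alpha)\in\neg h(\alpha)$, $h(\circ\alpha)\in\circ h(\alpha)$. $\Gamma\vDash_{\mathcal{M}_1^0}\alpha$ iff every valuation $h$ with $h[\Gamma]\subseteq D_1^0$ has $h(\alpha)\in D_1^0$. *)

From Stdlib Require Import Bool.

Inductive formula : Type :=
| Var : nat -> formula
| Neg : formula -> formula
| Circ : formula -> formula
| And : formula -> formula -> formula
| Or : formula -> formula -> formula
| Imp : formula -> formula -> formula.

Fixpoint circ_iter (m : nat) (a : formula) : formula :=
  match m with
  | O => a
  | S m' => Circ (circ_iter m' a)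
  end.

(** Axiom schemas of L_1^0 = mbC + (ciw) + circ circ circ alpha.
    Positive classical logic: standard axiomatization (Ax1-Ax9) as in
    Carnielli-Coniglio's presentation of mbC. *)
Inductive axiom_L10 : formula -> Prop :=
| Ax1 : forall a b, axiom_L10 (Imp a (Imp b a))
| Ax2 : forall a b c,
    axiom_L10 (Imp (Imp a b) (Imp (Imp a (Imp b c)) (Imp a c)))
| Ax3 : forall a b, axiom_L10 (Imp a (Imp b (And a b)))
| Ax4 : forall a b, axiom_L10 (Imp (And a b) a)
| Ax5 : forall a b, axiom_L10 (Imp (And a b) b)
| Ax6 : forall a b, axiom_L10 (Imp a (Or a b))
| Ax7 : forall a b, axiom_L10 (Imp b (Or a b))
| Ax8 : forall a b c,
    axiom_L10 (Imp (Imp a c) (Imp (Imp b c) (Imp (Or a b) c)))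
| Ax9 : forall a b, axiom_L10 (Or a (Imp a b))
| AxTND : forall a, axiom_L10 (Or a (Neg a))
| Axbc1 : forall a b, axiom_L10 (Imp (Circ a) (Imp a (Imp (Neg a) b)))
| Axciw : forall a, axiom_L10 (Or (Circ a) (And a (Neg a)))
| AxCirc3 : forall a, axiom_L10 (circ_iter 3 a).

Inductive derivable_L10 (Gamma : formula -> Prop) : formula -> Prop :=
| D_hyp : forall a, Gamma a -> derivable_L10 Gamma a
| D_ax : forall a, axiom_L10 a -> derivable_L10 Gamma a
| D_mp : forall a b, derivable_L10 Gamma a -> derivable_L10 Gamma (Imp a b) ->
    derivable_L10 Gamma b.

Definition elt : Type := (bool * bool * bool)%type.
Definition c1 (x : elt) : bool := let '(a, _, _) := x in a.
Definition c2 (x : elt) : bool := let '(_, b, _) := x in b.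
Definition c3 (x : elt) : bool := let '(_, _, c) := x in c.

Definition inB10 (x : elt) : Prop :=
  (c1 x || c2 x) = true /\ (c3 x || negb (c1 x && c2 x)) = true.

(** Multioperations of B_1^0 as membership predicates. *)
Definition m_and (x y z : elt) : Prop := inB10 z /\ c1 z = (c1 x && c1 y).
Definition m_or  (x y z : elt) : Prop := inB10 z /\ c1 z = (c1 x || c1 y).
Definition m_imp (x y z : elt) : Prop := inB10 z /\ c1 z = implb (c1 x) (c1 y).
Definition m_neg (x z : elt) : Prop := inB10 z /\ c1 z = c2 x.
Definition m_circ (x z : elt) : Prop :=
  z = (negb (c1 x && c2 x), c3 x, c3 x && negb (c1 x && c2 x)).

Definition designated (x : elt) : Prop := c1 x = true.

Definition valuation (h : formula -> elt) : Prop :=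
  (forall a, inB10 (h a)) /\
  (forall a b, m_and (h a) (h b) (h (And a b))) /\
  (forall a b, m_or (h a) (h b) (h (Or a b))) /\
  (forall a b, m_imp (h a) (h b) (h (Imp a b))) /\
  (forall a, m_neg (h a) (h (Neg a))) /\
  (forall a, m_circ (h a) (h (Circ a))).

Definition entails_M10 (Gamma : formula -> Prop) (a : formula) : Prop :=
  forall h, valuation h -> (forall g, Gamma g -> designated (h g)) ->
    designated (h a).

(* Every axiom is designated under every valuation and modus ponens preserves
   designation.  Only the schema [circ_iter 3 a] needs thought: the third
   coordinate of [circ (circ x)] is always 0, and an element [y] of B_1^0 with
   [y3 = 0] has [y1 && y2 = false], so [circ y] is designated. *)
From Stdlib Require Import Bool.

Definition circ_op (x : elt) : elt :=
  (negb (c1 x && c2 x), c3 x, c3 x && negb (c1 x && c2 x)).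

Lemma c1_circ_op (x : elt) : c1 (circ_op x) = negb (c1 x && c2 x).
Proof. reflexivity. Qed.

Lemma c3_circ_op_circ_op (x : elt) : c3 (circ_op (circ_op x)) = false.
Proof. destruct x as [[[] []] []]; reflexivity. Qed.

Lemma c1_circ_op_of_c3 (y : elt) :
  inB10 y -> c3 y = false -> c1 (circ_op y) = true.
Proof.
  intros [_ Hy] Hy3; rewrite c1_circ_op.
  rewrite Hy3 in Hy; exact Hy.
Qed.

Lemma c1_or_c2 (x : elt) : inB10 x -> c1 x || c2 x = true.
Proof. intros [Hx _]; exact Hx. Qed.

Section Soundness.

Variable h : formula -> elt.
Hypothesis h_valuation : valuation h.

Lemma valuation_inB10 (a : formula) : inB10 (h a).
Proof. apply h_valuation. Qed.

Lemma c1_And (a b : formula) : c1 (h (And a b)) = c1 (h a) && c1 (h b).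
Proof. apply h_valuation. Qed.

Lemma c1_Or (a b : formula) : c1 (h (Or a b)) = c1 (h a) || c1 (h b).
Proof. apply h_valuation. Qed.

Lemma c1_Imp (a b : formula) : c1 (h (Imp a b)) = implb (c1 (h a)) (c1 (h b)).
Proof. apply h_valuation. Qed.

Lemma c1_Neg (a : formula) : c1 (h (Neg a)) = c2 (h a).
Proof. apply h_valuation. Qed.

Lemma h_Circ (a : formula) : h (Circ a) = circ_op (h a).
Proof. apply h_valuation. Qed.

Lemma c1_Circ (a : formula) : c1 (h (Circ a)) = negb (c1 (h a) && c2 (h a)).
Proof. rewrite h_Circ; apply c1_circ_op. Qed.

Lemma designated_circ3 (a : formula) : designated (h (circ_iter 3 a)).
Proof.
  unfold designated; simpl; rewrite !h_Circ.
  apply c1_circ_op_of_c3.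
  - rewrite <- !h_Circ; apply valuation_inB10.
  - apply c3_circ_op_circ_op.
Qed.

Hint Rewrite c1_And c1_Or c1_Imp c1_Neg c1_Circ : c1.

Lemma axiom_designated (a : formula) : axiom_L10 a -> designated (h a).
Proof.
  unfold designated; intros Ha.
  destruct Ha as [ | | | | | | | | | a | | | a].
  13: apply designated_circ3.
  10: autorewrite with c1; apply c1_or_c2, valuation_inB10.
  all: autorewrite with c1;
    repeat match goal with
    | |- context [c1 (h ?x)] => destruct (c1 (h x))
    | |- context [c2 (h ?x)] => destruct (c2 (h x))
    end; reflexivity.
Qed.

Lemma derivable_designated (Gamma : formula -> Prop) (a : formula) :
  (forall g, Gamma g -> designated (h g)) ->
  derivable_L10 Gamma a -> designated (h a).
Proof.
  intros HGamma Hd.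
  induction Hd as [a Ha | a Ha | a b _ IHa _ IHab].
  - exact (HGamma a Ha).
  - exact (axiom_designated a Ha).
  - unfold designated in *.
    rewrite c1_Imp, IHa in IHab; exact IHab.
Qed.

End Soundness.

Theorem theorem2 (Gamma : formula -> Prop) (a : formula) :
  derivable_L10 Gamma a -> entails_M10 Gamma a.
Proof.
  intros Hd h Hh HGamma.
  exact (derivable_designated h Hh Gamma a HGamma Hd).
Qed.
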